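(* Fix a policy $\pi$ and $0 \le \eta < 1$, and a random field $Z_0$. Define $Z_{t+1} = \mathcal{T}^{\pi,\eta} Z_t$ and $Z^0_{t+1} = \mathcal{T}^{\pi} Z^0_t$ for $t \ge 0$, with $Z^0_0 = Z_0$. Then for all $s\in\mathcal{S}$, $a\in\mathcal{A}$ and $t \ge 0$, $\mathbb{E}_z Z_t(s,a) \le \mathbb{E}_z Z^0_t(s,a)$.
   Context: Setting: a Markov decision process with state space $\mathcal{S}$, action space $\mathcal{A}$, kernel $p_{\text{env}}(\cdot\mid s,a)$ giving a joint law of reward $r$ and next state $s'$, stochastic policy $\pi(\cdot\mid s)$, discount $\gamma\in[0,1)$. A random field $Z$ assigns to each $(s,a)$ an integrable real random variable $Z(s,a)$ (only its law matters); $\mathbb{E}_z Z(s,a) = \mathbb{E}[Z(s,a)]$. Distributional Bellman operator: $[\mathcal{T}^\pi Z](s,a)$ has the law of $r+\gamma Z(s',a')$ with $(r,s')\sim p_{\text{env}}(\cdot\mid s,a)$, $a'\sim\pi(\cdot\mid s')$, $Z(s',a')$ drawn independently given $(r,s',a')$. For a real random variable $Z$ with continuous distribution function $F_Z$ and quantile function $F_Z^{-1}(u)=\inf\{z: F_Z(z)\ge u\}$, the truncation $\mathcal{S}^\eta(Z)$ has distribution function $F_Z(z)/(1-\eta)$ for $z \le F_Z^{-1}(1-\eta)$ and $1$ for $z > F_Z^{-1}(1-\eta)$; for a random field it is applied pointwise in $(s,a)$. The truncated operator is $\mathcal{T}^{\pi,\eta} = \mathcal{T}^\pi\circ\mathcal{S}^\eta$.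 Standing assumption: all random variables $Z_t(s,a)$ have continuous distribution functions so that the truncations are well defined. *)

From HB Require Import structures.
From mathcomp Require Import all_boot all_order all_algebra.
From mathcomp Require Import all_classical all_reals all_analysis.
Set Implicit Arguments. Unset Strict Implicit. Unset Printing Implicit Defensive.
Import Order.TTheory GRing.Theory Num.Theory.
Local Open Scope classical_set_scope.
Local Open Scope ring_scope.

Section Defs.
Context {R : realType}.

Definition distfun (mu : set R -> \bar R) (z : R) : \bar R := mu [set x | x <= z].

(* quantile F^{-1}(u) = inf {z | F(z) >= u}, in the extended reals
   (inf of the empty set is +oo) *)
Definition quantile (mu : set R -> \bar R) (u : R) : \bar R :=
  ereal_inf [set z%:E | z in [set z | (u%:E <= distfun mu z)%E]].

Definition is_truncation (eta : R) (mu nu : set R -> \bar R) : Prop :=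
  forall z : R, distfun nu z =
    if (z%:E <= quantile mu (1 - eta))%E
    then (distfun mu z * ((1 - eta)^-1)%:E)%E
    else 1%E.

(* distributional Bellman operator: [T^pi Y](s,a)(B) = P(r + gamma Y(s',a') in B)
   with (r,s') ~ penv(.|s,a), a' ~ pi(.|s'), Y(s',a') drawn independently *)
Definition bellman {dS dA : measure_display}
  {S : measurableType dS} {A : measurableType dA}
  (penv : R.-pker (S * A)%type ~> (R * S)%type) (pi : R.-pker S ~> A)
  (gamma : R) (Y : (S * A)%type -> set R -> \bar R)
  (sa : (S * A)%type) (B : set R) : \bar R :=
  (\int[penv sa]_rs \int[pi rs.2]_a' Y (rs.2, a') [set x | B (rs.1 + gamma * x)%R])%E.

Definition law_mean (mu : {measure set R -> \bar R}) : \bar R := (\int[mu]_x x%:E)%E.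

End Defs.

From HB Require Import structures.
From mathcomp Require Import all_boot all_order all_algebra.
From mathcomp Require Import all_classical all_reals all_analysis.
Import Order.TTheory GRing.Theory Num.Theory numFieldNormedType.Exports.
Local Open Scope classical_set_scope.
Local Open Scope ring_scope.

(* Order laws by their distribution functions, F_nu <= F_mu meaning that nu
   is stochastically larger than mu.  Truncation only raises the distribution
   function, and the Bellman operator preserves the order: for gamma >= 0 the
   preimage of a half-line under x |-> r + gamma x is a half-line (or empty, or
   everything), and integrating against the kernels is monotone.  By induction
   F_{Z^0_t} <= F_{Z_t}, and by the layer-cake formula
   E X = int_0^oo (1 - F) - int_-oo^0 F the stochastically smaller law has the
   smaller mean. *)

(* No measurability is needed: for nonnegative integrands the integral is a
   supremum over the simple functions lying below. *)
Lemma ge0_le_integral_nonmeas d (T : measurableType d) (R : realType)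
    (mu : {measure set T -> \bar R}) (D : set T) (f g : T -> \bar R) :
  (forall x, D x -> 0 <= f x)%E -> (forall x, D x -> f x <= g x)%E ->
  (\int[mu]_(x in D) f x <= \int[mu]_(x in D) g x)%E.
Proof.
move=> f0 fg; have g0 x : D x -> (0 <= g x)%E.
  by move=> Dx; exact: le_trans (f0 x Dx) (fg x Dx).
rewrite !ge0_integralE//; apply: ereal_sup_le => _ [h hf <-]; exists h => //= x.
apply: le_trans (hf x) _; rewrite /patch; case: ifPn => // /[!inE] Dx.
exact: fg.
Qed.

Section kernel_probability.
Context {d} {X : measurableType d} {R : realType} (k : R.-pker X ~> R) (x : X).

Definition kernel_prob : set R -> \bar R := k x.

HB.instance Definition _ := Measure.on kernel_prob.
HB.instance Definition _ :=
  Measure_isProbability.Build _ _ _ kernel_prob (prob_kernel x).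

End kernel_probability.

Definition distfun_le {R : realType} (mu nu : set R -> \bar R) : Prop :=
  forall z : R, (distfun mu z <= distfun nu z)%E.

Lemma measurable_le_halfline {R : realType} (z : R) :
  measurable [set x : R | x <= z].
Proof. by rewrite -set_itvNyc; exact: measurable_itv. Qed.

Section law_mean_monotone.
Context {R : realType}.

Let idR : R -> R := idfun.

#[local] HB.instance Definition _ :=
  @isMeasurableFun.Build _ _ _ _ idR (@measurable_id _ _ setT).

Let law_mean_expectation (P : probability R R) : law_mean P = expectation P idR.
Proof. by rewrite expectation_def. Qed.

Let cdf_id (P : probability R R) r : cdf (idR : {RV P >-> R}) r = distfun P r.
Proof. by rewrite /cdf /distribution /pushforward preimage_id set_itvNyc. Qed.

Lemma law_mean_le_distfun (P Q : probability R R) :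
  P.-integrable setT EFin -> Q.-integrable setT EFin -> distfun_le Q P ->
  (law_mean P <= law_mean Q)%E.
Proof.
move=> iP iQ QP; rewrite !law_mean_expectation.
rewrite !expectation_cdf_ccdf; try exact/Lfun1_integrable.
apply: leeB; apply: ge0_le_integral_nonmeas => r _ //.
- by rewrite !ccdf_1_cdf !cdf_id leeB.
- by rewrite !cdf_id.
Qed.

End law_mean_monotone.

Lemma distfun_le_truncation {R : realType} (P : probability R R)
    {eta : R} {nu : set R -> \bar R} :
  0 <= eta -> eta < 1 -> is_truncation eta P nu -> distfun_le P nu.
Proof.
move=> eta0 eta1 Pnu z; rewrite Pnu; case: ifPn => _.
  apply: lee_pemulr; first exact: measure_ge0.
  by rewrite lee_fin invf_ge1 ?subr_gt0 // gerBl.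
exact: probability_le1 (measurable_le_halfline z).
Qed.

Lemma distfun_le_affine_preimage {R : realType} (P Q : probability R R)
    {gamma : R} (r z : R) :
  0 <= gamma -> distfun_le P Q ->
  (P [set x | (r + gamma * x <= z)%R] <= Q [set x | (r + gamma * x <= z)%R])%E.
Proof.
rewrite le_eqVlt => /predU1P[<- _|gamma_gt0 PQ].
  have [rz|zr] := leP r z.
    have -> : [set x : R | r + 0 * x <= z] = setT.
      by apply/seteqP; split => x //= _; rewrite mul0r addr0.
    by rewrite !probability_setT.
  have -> : [set x : R | r + 0 * x <= z] = set0.
    by apply/seteqP; split => x //=; rewrite mul0r addr0 leNgt zr.
  by rewrite !measure0.
have -> : [set x : R | r + gamma * x <= z] = [set x | x <= (z - r) / gamma].
  by apply/seteqP; split => x /=; rewrite ler_pdivlMr // lerBrDl mulrC.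
exact: PQ.
Qed.

Lemma distfun_le_bellman {R : realType} {dS dA : measure_display}
    {S : measurableType dS} {A : measurableType dA}
    (penv : R.-pker (S * A)%type ~> (R * S)%type) (pi : R.-pker S ~> A)
    (gamma : R) (Y1 Y2 : R.-pker (S * A)%type ~> R) (sa : (S * A)%type) :
  0 <= gamma -> (forall x, distfun_le (Y1 x) (Y2 x)) ->
  distfun_le (bellman penv pi gamma (fun x => Y1 x) sa)
             (bellman penv pi gamma (fun x => Y2 x) sa).
Proof.
move=> gamma0 Y12 z; apply: ge0_le_integral_nonmeas => [rs _|rs _].
  by apply: integral_ge0 => a' _; exact: measure_ge0.
apply: ge0_le_integral_nonmeas => [a' _|a' _]; first exact: measure_ge0.
exact: (distfun_le_affine_preimage (kernel_prob Y1 _) (kernel_prob Y2 _)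
  rs.1 z gamma0 (Y12 _)).
Qed.

Theorem lemma10 (R : realType) (dS dA : measure_display)
  (S : measurableType dS) (A : measurableType dA)
  (penv : R.-pker (S * A)%type ~> (R * S)%type) (pi : R.-pker S ~> A)
  (gamma eta : R) (hgamma0 : 0 <= gamma) (hgamma1 : gamma < 1)
  (heta0 : 0 <= eta) (heta1 : eta < 1)
  (Z Y Z0 : nat -> R.-pker (S * A)%type ~> R)
  (hintZ : forall t sa, (Z t sa).-integrable setT (fun x => x%:E))
  (hintZ0 : forall t sa, (Z0 t sa).-integrable setT (fun x => x%:E))
  (hcont : forall t sa, continuous (fun z : R => fine (distfun (Z t sa) z)))
  (hY : forall t sa, is_truncation eta (Z t sa) (Y t sa))
  (hZ : forall t sa B, measurable B ->
          Z t.+1 sa B = bellman penv pi gamma (fun x => Y t x) sa B)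
  (hZ00 : forall sa B, measurable B -> Z0 0 sa B = Z 0 sa B)
  (hZ0 : forall t sa B, measurable B ->
          Z0 t.+1 sa B = bellman penv pi gamma (fun x => Z0 t x) sa B) :
  forall (s : S) (a : A) (t : nat), (law_mean (Z t (s, a)) <= law_mean (Z0 t (s, a)))%E.
Proof.
(* [hcont] only guarantees that the truncations [hY] exist, and [hgamma1] is
   irrelevant for a finite horizon. *)
have dominated t sa : distfun_le (Z0 t sa) (Z t sa).
  elim: t sa => [|t IH] sa z; rewrite /distfun.
    by rewrite hZ00 //; exact: measurable_le_halfline.
  rewrite hZ0 ?hZ; try exact: measurable_le_halfline.
  apply: distfun_le_bellman => // x w; apply: le_trans (IH x w) _.
  exact: (distfun_le_truncation (kernel_prob (Z t) x) heta0 heta1 (hY t x)).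
move=> s a t.
apply: (law_mean_le_distfun (kernel_prob (Z t) (s, a)) (kernel_prob (Z0 t) (s, a))).
- exact: hintZ.
- exact: hintZ0.
- exact: dominated.
Qed.
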